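(* Let $F$ be a violating edge set and let $(\mathcal{T},\mathcal{M},y)$ be a tree embedding of $(G,\tilde x)$ that is good for $F$. Let $(A,B)\in Z_F$ and let $S\subseteq V(\mathcal{T})$ be such that all leaves corresponding to $A$ lie in $S$ and all leaves corresponding to $B$ lie in $V(\mathcal{T})\setminus S$. Then $y\big(\delta_{\mathcal{T}\setminus\mathcal{M}^{-1}(F)}(S)\big)\ge\frac{1}{4(p+q)\beta}$.
   Context: Setting: $G=(V,E)$ is an undirected graph with edges partitioned into safe edges $\mathcal{S}$ and unsafe edges; $p,q$ are nonnegative integers with $p+q\ge1$; $(s_i,t_i)$, $i\in[k]$, are terminal pairs; $H\subseteq E$ is such that every pair is $(p,q)$-flex-connected in $H$ (every cut $\delta_H(S)$ separating $s_i$ from $t_i$ has at least $p$ safe edges or at least $p+q$ edges). A set $S\subseteq V$ is violated if it separates some pair, $|\delta_H(S)|=p+q$ and $|\delta_H(S)\cap\mathcal{S}|<p$; a violating edge set is $F=\delta_H(S)$ for a violated $S$. Let $\beta\ge1$. Let $x:E\setminus H\to[0,1]$ satisfy $x(\delta_{E\setminus H}(S))\ge1$ for every violated $S$, and assume $0<x_e<\frac{1}{4(p+q)\beta}$ for every $e\in E\setminus H$. Define capacities $\tilde x_e=\frac{1}{4(p+q)\beta}$ for $e\in H$ and $\tilde x_e=x_e$ for $e\in E\setminus H$. A tree embedding of $(G,\tilde x)$ is a tree $\mathcal{T}$ with $\mathcal{M}_1:V(\mathcal{T})\to V$ restricting to a bijection between leaves and $V$ (we identify vertices with leaves), and $\mathcal{M}_2$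 mapping each tree edge $(a,b)$ to a path in $G$ between $\mathcal{M}_1(a),\mathcal{M}_1(b)$; capacities $y(f)=\tilde x(\delta_G(A'))$ with $A'$ the vertex set of leaves in one component of $\mathcal{T}-f$; $\mathcal{M}^{-1}(F)=\{f:\mathcal{M}_2(f)\cap F\ne\emptyset\}$; good for $F$ means $y(\mathcal{M}^{-1}(F))\le\frac12$. $\delta_{\mathcal{T}\setminus\mathcal{M}^{-1}(F)}(S)$ denotes tree edges not in $\mathcal{M}^{-1}(F)$ with exactly one endpoint in $S$. $\mathcal{Q}_F$ is the set of components of $(V,H\setminus F)$; $Q_{s_i},Q_{t_i}$ contain $s_i,t_i$; $Q\in\mathcal{Q}_F$ is shattered if its leaves are not all in one component of $\mathcal{T}-\mathcal{M}^{-1}(F)$; disjoint $A,B$ partition the shattered components if each shattered component lies in $A$ or in $B$; $Z_F=\{(A\cup Q_{s_i},B\cup Q_{t_i}):(A,B)\text{ partitions the shattered components},i\in[k]\}$. *)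

From HB Require Import structures.
From mathcomp Require Import all_boot all_order all_algebra.
Set Implicit Arguments.
Unset Strict Implicit.
Unset Printing Implicit Defensive.
Import Order.TTheory GRing.Theory Num.Theory.

(* Graphs are finite multigraphs: a vertex finType V, an edge finType E and an
   endpoint map ends : E -> V * V (edges undirected; orientation irrelevant). *)

Definition joins (V : eqType) (E : Type) (ends : E -> V * V) (e : E) (u w : V) : bool :=
  (((ends e).1 == u) && ((ends e).2 == w)) || (((ends e).1 == w) && ((ends e).2 == u)).

Definition cut (V E : finType) (ends : E -> V * V) (X : {set E}) (S : {set V}) : {set E} :=
  [set e in X | ((ends e).1 \in S) != ((ends e).2 \in S)].

Definition conn (V E : finType) (ends : E -> V * V) (X : {set E}) : rel V :=
  connect (fun u w => [exists e in X, joins ends e u w]).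

Definition has_cycle (N TE : finType) (tend : TE -> N * N) : Prop :=
  exists (es : seq TE) (vs : seq N),
    [/\ size es = size vs, (0 < size es)%N, uniq es, uniq vs &
        forall (e0 : TE) (v0 : N) (j : nat), (j < size es)%N ->
          joins tend (nth e0 es j) (nth v0 vs j) (nth v0 vs (j.+1 %% size vs))].

Definition is_tree (N TE : finType) (tend : TE -> N * N) : Prop :=
  (forall a b : N, conn tend [set: TE] a b) /\ ~ has_cycle tend.

Definition is_leaf (N TE : finType) (tend : TE -> N * N) (a : N) : bool :=
  #|[set f : TE | ((tend f).1 == a) || ((tend f).2 == a)]| == 1%N.

Definition is_path (V E : finType) (ends : E -> V * V) (u w : V) (es : seq E) : Prop :=
  exists vs : seq V,
    [/\ size vs = size es, last u vs = w, uniq (u :: vs) &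
        forall (e0 : E) (j : nat), (j < size es)%N ->
          joins ends (nth e0 es j) (nth u (u :: vs) j) (nth u vs j)].

Definition tree_embedding (V E : finType) (ends : E -> V * V)
  (N TE : finType) (tend : TE -> N * N) (M1 : N -> V) (M2 : TE -> seq E) : Prop :=
  [/\ is_tree tend,
      (forall a b, is_leaf tend a -> is_leaf tend b -> M1 a = M1 b -> a = b),
      (forall v, exists2 a, is_leaf tend a & M1 a = v) &
      (forall f, is_path ends (M1 (tend f).1) (M1 (tend f).2) (M2 f))].

Definition xtilde (R : numFieldType) (E : finType) (p q : nat) (beta : R)
  (H : {set E}) (x : E -> R) (e : E) : R :=
  if e \in H then ((4 * (p + q)%:R * beta)^-1)%R else x e.

(* y(f) = tilde x (delta_G(A')), A' = vertices of the leaves in the component of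
   T - f containing the first endpoint of f *)
Definition tree_cap (R : numFieldType) (V E : finType) (ends : E -> V * V)
  (p q : nat) (beta : R) (H : {set E}) (x : E -> R)
  (N TE : finType) (tend : TE -> N * N) (M1 : N -> V) (f : TE) : R :=
  (\sum_(e in cut ends [set: E]
           [set v | [exists a, [&& is_leaf tend a, M1 a == v &
                                   conn tend ([set: TE] :\ f) (tend f).1 a]]])
     xtilde p q beta H x e)%R.

Definition Minv (E TE : finType) (M2 : TE -> seq E) (F : {set E}) : {set TE} :=
  [set f | has (fun e => e \in F) (M2 f)].

Definition separates (V : finType) (S : {set V}) (u w : V) : bool :=
  (u \in S) != (w \in S).

Definition flex_connected (V E : finType) (ends : E -> V * V) (safe : {set E})
  (p q k : nat) (s t : 'I_k -> V) (H : {set E}) : Prop :=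
  forall (i : 'I_k) (S : {set V}), separates S (s i) (t i) ->
    (p <= #|cut ends H S :&: safe|)%N || (p + q <= #|cut ends H S|)%N.

Definition violated (V E : finType) (ends : E -> V * V) (safe : {set E})
  (p q k : nat) (s t : 'I_k -> V) (H : {set E}) (S : {set V}) : bool :=
  [&& [exists i, separates S (s i) (t i)],
      #|cut ends H S| == (p + q)%N & (#|cut ends H S :&: safe| < p)%N].

Definition violating (V E : finType) (ends : E -> V * V) (safe : {set E})
  (p q k : nat) (s t : 'I_k -> V) (H : {set E}) (F : {set E}) : Prop :=
  exists S : {set V}, violated ends safe p q s t H S /\ F = cut ends H S.

Definition compF (V E : finType) (ends : E -> V * V) (H F : {set E}) (v : V) : {set V} :=
  [set w | conn ends (H :\: F) v w].

Definition shattered (V E : finType) (N TE : finType) (tend : TE -> N * N)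
  (M1 : N -> V) (M2 : TE -> seq E) (F : {set E}) (Q : {set V}) : Prop :=
  exists a b, [/\ is_leaf tend a, is_leaf tend b, M1 a \in Q, M1 b \in Q &
                  ~~ conn tend (~: Minv M2 F) a b].

Definition partitions_shattered (V E : finType) (ends : E -> V * V) (H F : {set E})
  (N TE : finType) (tend : TE -> N * N) (M1 : N -> V) (M2 : TE -> seq E)
  (A B : {set V}) : Prop :=
  [disjoint A & B] /\
  forall v, shattered tend M1 M2 F (compF ends H F v) ->
    compF ends H F v \subset A \/ compF ends H F v \subset B.

Definition in_ZF (V E : finType) (ends : E -> V * V) (k : nat) (s t : 'I_k -> V)
  (H F : {set E}) (N TE : finType) (tend : TE -> N * N) (M1 : N -> V)
  (M2 : TE -> seq E) (X Y : {set V}) : Prop :=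
  exists (A B : {set V}) (i : 'I_k),
    [/\ partitions_shattered ends H F tend M1 M2 A B,
        X = A :|: compF ends H F (s i) & Y = B :|: compF ends H F (t i)].

(* Let U be the set of vertices whose leaves lie in S.  If an edge e of G crosses U
   and its two leaves are joined in a subforest T' of the tree, the tree path between
   them leaves S along some edge f of T'; f separates the two leaves in T, so e lies
   in the cut of G defining y(f), and y(f) >= x~(e).
   If some edge e of delta_H(U) avoids F, its component in (V, H \ F) cannot be
   shattered: it would lie in A or in B, hence on one side of S.  So the leaves of e
   are joined in T - M^-1(F), and the sum is at least x~(e) = 1/(4(p+q)beta).
   Otherwise delta_H(U) is contained in F; since U separates s_i from t_i,
   flex-connectivity forces U to be violated, and
   1 <= x(delta(U)) <= y(delta_T(S)) <= y(delta_{T - M^-1(F)}(S)) + 1/2. *)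

From HB Require Import structures.
From mathcomp Require Import all_boot all_order all_algebra.
From mathcomp Require Import zify lra.
Set Implicit Arguments. Unset Strict Implicit. Unset Printing Implicit Defensive.
Import Order.TTheory GRing.Theory Num.Theory.

Section TreePaths.
Variables (N TE : finType) (tend : TE -> N * N).

Definition adj (X : {set TE}) : rel N := fun u w => [exists e in X, joins tend e u w].

Definition tree_side (f : TE) : {set N} :=
  [set a | conn tend ([set: TE] :\ f) (tend f).1 a].

Lemma joins_sym e u w : joins tend e u w = joins tend e w u.
Proof. by rewrite /joins orbC. Qed.

Lemma conn_sym X : symmetric (conn tend X).
Proof.
apply: sym_connect_sym => u w.
by apply/existsP/existsP => -[e /andP[eX uw]]; exists e; rewrite eX joins_sym.
Qed.

Lemma joins_ends e u w : joins tend e u w ->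
  [/\ (tend e).1 \in [:: u; w], (tend e).2 \in [:: u; w] & u \in [:: (tend e).1; (tend e).2]].
Proof. by rewrite /joins !inE => /orP[] /andP[/eqP-> /eqP->]; rewrite !eqxx ?orbT. Qed.

Lemma uniq_path_edges X c p : path (adj X) c p -> uniq (c :: p) ->
  exists es : seq TE,
    [/\ size es = size p, uniq es, {subset es <= X},
        all (fun e => ((tend e).1 \in c :: p) && ((tend e).2 \in c :: p)) es &
        forall e0 v0 j, j < size p ->
          joins tend (nth e0 es j) (nth v0 (c :: p) j) (nth v0 p j)].
Proof.
elim: p c => [|w p IHp] c /=; first by exists [::].
move=> /andP[/existsP[e /andP[eX ecw]] wp] /andP[cNwp uwp].
have [es [size_es uniq_es esX ends_es nth_es]] := IHp w wp uwp.
have [e1 e2 ce] := joins_ends ecw.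
exists (e :: es); split => /=; first by rewrite size_es.
- rewrite uniq_es andbT; apply: contra cNwp => /(allP ends_es) /andP[e1wp e2wp].
  by move: ce; rewrite !inE => /orP[] /eqP->.
- by move=> f; rewrite inE => /orP[/eqP-> | /esX].
- have sub_cw : {subset [:: c; w] <= c :: w :: p}.
    by move=> v; rewrite !inE => /orP[]->; rewrite ?orbT.
  rewrite !sub_cw //=; apply: sub_all ends_es => f /andP[f1 f2].
  by rewrite in_cons f1 in_cons f2 !orbT.
- by move=> e0 v0 [|j] //= /nth_es; apply.
Qed.

Lemma mem_tree_side_conn g u w :
  conn tend ([set: TE] :\ g) u w -> (u \in tree_side g) = (w \in tree_side g).
Proof.
move=> uw; have wu : conn tend ([set: TE] :\ g) w u by rewrite conn_sym.
rewrite !inE; apply/idP/idP => [gu | gw]; first exact: connect_trans gu uw.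
exact: connect_trans gw wu.
Qed.

Lemma conn_avoiding_path X g c p : path (adj X) c p ->
  ((tend g).1 \notin c :: p) || ((tend g).2 \notin c :: p) ->
  conn tend ([set: TE] :\ g) c (last c p).
Proof.
move=> path_p g_out; apply/connectP; exists p => //.
apply: (@sub_in_path _ (mem (c :: p)) (adj X)) path_p; last exact/allP.
move=> u w u_in w_in /existsP[e /andP[eX euw]]; apply/existsP; exists e.
rewrite euw andbT !inE andbT; apply: contraL g_out => /eqP eg.
have [e1 e2 _] := joins_ends euw; rewrite -eg.
have sub_uw : {subset [:: u; w] <= c :: p} by move=> v; rewrite !inE => /orP[]/eqP->.
by rewrite (sub_uw _ e1) (sub_uw _ e2).
Qed.

Lemma split_path_cross (S : {set N}) a p : a \in S -> last a p \notin S ->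
  exists p1 z' p2, [/\ p = p1 ++ z' :: p2, last a p1 \in S & z' \notin S].
Proof.
elim: p a => [|w p IHp] a /=; first by move=> ->.
move=> aS last_p; have [wS | wNS] := boolP (w \in S); last by exists [::], w, p.
by have [p1 [z' [p2 [-> ? ?]]]] := IHp w wS last_p; exists (w :: p1), z', p2.
Qed.

Hypothesis tree : is_tree tend.

Lemma tree_ends_disconnected g : ~~ conn tend ([set: TE] :\ g) (tend g).1 (tend g).2.
Proof.
case: tree => _ acyclic; apply/negP => /connectP[p0 path_p0 last_p0].
case: (shortenP path_p0) last_p0 => p path_p uniq_p _ last_p.
have [es [size_es uniq_es esX _ nth_es]] := uniq_path_edges path_p uniq_p.
apply: acyclic; exists (rcons es g), ((tend g).1 :: p); split.
- by rewrite size_rcons size_es.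
- by rewrite size_rcons.
- by rewrite rcons_uniq uniq_es andbT; apply/negP => /esX; rewrite !inE eqxx.
- exact: uniq_p.
move=> e0 v0 j; rewrite size_rcons ltnS leq_eqVlt size_es => /orP[/eqP-> | lt_jp].
  rewrite nth_rcons size_es ltnn eqxx modnn /= joins_sym.
  by rewrite (nth_last v0 ((tend g).1 :: p)) /= -last_p /joins !eqxx.
by rewrite nth_rcons size_es lt_jp modn_small ?ltnS //; apply: nth_es.
Qed.

Lemma tree_side_ends g : separates (tree_side g) (tend g).1 (tend g).2.
Proof.
have disc := tree_ends_disconnected g.
by rewrite /separates !inE (negbTE disc) [conn _ _ _ _]connect0.
Qed.

Lemma tree_cut_separates X (S : {set N}) a b :
  separates S a b -> conn tend X a b ->
  exists2 g, g \in cut tend X S & separates (tree_side g) a b.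
Proof.
wlog aS : a b / a \in S => [wlog_aS sep ab | sep].
  have [|aNS] := boolP (a \in S); first by move=> aS; apply: wlog_aS.
  have bS : b \in S by move: sep; rewrite /separates (negbTE aNS); case: (b \in S).
  suff [g gX] : exists2 g, g \in cut tend X S & separates (tree_side g) b a.
    by rewrite /separates eq_sym; exists g.
  apply: wlog_aS => //; first by rewrite /separates eq_sym.
  by rewrite conn_sym.
have bNS : b \notin S by move: sep; rewrite /separates aS; case: (b \in S).
case/connectP=> p0 path_p0 last_p0.
case: (shortenP path_p0) last_p0 => p path_p uniq_p _ last_p.
rewrite last_p in bNS.
have [p1 [z' [p2 [def_p zS z'NS]]]] := split_path_cross aS bNS.
have : uniq ((a :: p1) ++ z' :: p2) by move: uniq_p; rewrite def_p.
rewrite cat_uniq => /and3P[_ disj _].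
move: path_p last_p; rewrite def_p cat_path last_cat /=.
set z := last a p1 in zS disj *.
case/and3P=> path_p1 /existsP[g /andP[gX gzz']] path_p2 ->.
have z'Np1 : z' \notin a :: p1.
  by apply: contra disj => z'_in; apply/hasP; exists z'; rewrite ?mem_head.
have zNp2 : z \notin z' :: p2.
  by apply: contra disj => z_in; apply/hasP; exists z; rewrite // mem_last.
have [sepS sep_zz' out1 out2] : [/\ separates S (tend g).1 (tend g).2,
    separates (tree_side g) z z',
    ((tend g).1 \notin a :: p1) || ((tend g).2 \notin a :: p1) &
    ((tend g).1 \notin z' :: p2) || ((tend g).2 \notin z' :: p2)].
  have := tree_side_ends g.
  case/orP: gzz' => /andP[/eqP-> /eqP->]; rewrite /separates z'Np1 zNp2 ?orbT //.
    by rewrite zS (negbTE z'NS).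
  by rewrite zS (negbTE z'NS) eq_sym.
exists g; first by rewrite inE gX; apply: sepS.
rewrite /separates (mem_tree_side_conn (conn_avoiding_path path_p1 out1)).
have z'_last := conn_avoiding_path path_p2 out2.
by rewrite -(mem_tree_side_conn z'_last).
Qed.

End TreePaths.

Local Open Scope ring_scope.

Section NonnegSums.
Variables (R : numDomainType) (I : finType) (G : I -> R).
Hypothesis G_ge0 : forall i, 0 <= G i.

Lemma ler_sum_sub (P Q : pred I) :
  (forall i, P i -> Q i) -> \sum_(i | P i) G i <= \sum_(i | Q i) G i.
Proof.
move=> PQ; rewrite [leRHS](bigID P) /=.
rewrite (eq_bigl P) => [|i]; last by rewrite andb_idl //; apply: PQ.
by rewrite lerDl sumr_ge0.
Qed.

Lemma ler_sum_mem (A : {set I}) i : i \in A -> G i <= \sum_(j in A) G j.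
Proof. by move=> iA; rewrite (bigD1 i) //= lerDl sumr_ge0. Qed.

Lemma ler_sum_subsetU (A B C : {set I}) : A \subset B :|: C ->
  \sum_(i in A) G i <= \sum_(i in B) G i + \sum_(i in C) G i.
Proof.
move=> /subsetP sub; apply: le_trans (ler_sum_sub sub) _.
rewrite (big_setID B) /= (setIidPr (subsetUl B C)) lerD2l.
by apply: ler_sum_sub => j; rewrite !inE => /andP[/negbTE-> /=].
Qed.

Lemma ler_sum_cover (J : finType) (W : {set I}) (D : {set J}) (C : J -> {set I}) :
  (forall i, i \in W -> exists2 j, j \in D & i \in C j) ->
  \sum_(i in W) G i <= \sum_(j in D) \sum_(i in C j) G i.
Proof.
move=> cover; apply: (@le_trans _ _ (\sum_(i in W) \sum_(j in D | i \in C j) G i)).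
  apply: ler_sum => i iW; have [j jD ij] := cover i iW.
  by rewrite (bigD1 j) /= ?jD // lerDl sumr_ge0.
rewrite (exchange_big_dep (Q := fun i j => (j \in D) && (i \in C j)) (mem D)) /=;
  last by move=> i j _ /andP[].
by apply: ler_sum => j _; apply: ler_sum_sub => i /and3P[].
Qed.

End NonnegSums.

Section LeafImages.
Variables (V E N TE : finType) (ends : E -> V * V) (tend : TE -> N * N) (M1 : N -> V).

Definition leaf_image (S : {set N}) : {set V} :=
  [set v | [exists a, [&& is_leaf tend a, M1 a == v & a \in S]]].

Definition edge_leaves (e : E) (a1 a2 : N) : Prop :=
  [/\ is_leaf tend a1, is_leaf tend a2, M1 a1 = (ends e).1 & M1 a2 = (ends e).2].

Lemma edge_leaves_conn_compl_Minv (M2 : TE -> seq E) (H F : {set E}) (A B : {set V})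
    (S : {set N}) e a1 a2 :
  partitions_shattered ends H F tend M1 M2 A B ->
  (forall a, is_leaf tend a -> M1 a \in A -> a \in S) ->
  (forall a, is_leaf tend a -> M1 a \in B -> a \notin S) ->
  e \in H :\: F -> edge_leaves e a1 a2 -> separates S a1 a2 ->
  conn tend (~: Minv M2 F) a1 a2.
Proof.
move=> [_ part] AS BS eHF [la1 la2 a1e a2e]; apply: contraTT => disc.
set Q := compF ends H F (ends e).1.
have Q1 : (ends e).1 \in Q by rewrite inE; apply: connect0.
have Q2 : (ends e).2 \in Q.
  by rewrite inE; apply: connect1; apply/existsP; exists e; rewrite eHF /joins !eqxx.
have : shattered tend M1 M2 F Q by exists a1, a2; rewrite a1e a2e.
case/part=> /subsetP sub; rewrite /separates.
  by rewrite !AS // ?a1e ?a2e sub.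
by rewrite !(negbTE (BS _ _ _)) // ?a1e ?a2e sub.
Qed.

Hypothesis leaf_inj :
  forall a b, is_leaf tend a -> is_leaf tend b -> M1 a = M1 b -> a = b.
Hypothesis leaf_surj : forall v, exists2 a, is_leaf tend a & M1 a = v.

Lemma mem_leaf_image S a : is_leaf tend a -> (M1 a \in leaf_image S) = (a \in S).
Proof.
move=> la; rewrite inE; apply/existsP/idP => [[b /and3P[lb /eqP ba bS]] | aS].
  by rewrite -(leaf_inj lb la ba).
by exists a; rewrite la eqxx.
Qed.

Lemma edge_leaves_exist e : exists a1 a2, edge_leaves e a1 a2.
Proof.
have [a1 ? ?] := leaf_surj (ends e).1; have [a2 ? ?] := leaf_surj (ends e).2.
by exists a1, a2.
Qed.

Lemma mem_cut_leaf_image Z S e a1 a2 : edge_leaves e a1 a2 ->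
  (e \in cut ends Z (leaf_image S)) = (e \in Z) && separates S a1 a2.
Proof. by case=> la1 la2 a1e a2e; rewrite inE -a1e -a2e !mem_leaf_image. Qed.

Lemma leaf_image_separates (S : {set N}) (X Y : {set V}) u w :
  (forall a, is_leaf tend a -> M1 a \in X -> a \in S) ->
  (forall a, is_leaf tend a -> M1 a \in Y -> a \notin S) ->
  u \in X -> w \in Y -> separates (leaf_image S) u w.
Proof.
move=> XS YS uX wY; have [a la au] := leaf_surj u; have [b lb bw] := leaf_surj w.
have aS : a \in S by apply: XS; rewrite // au.
have bNS : b \notin S by apply: YS; rewrite // bw.
by rewrite /separates -au -bw !mem_leaf_image // aS (negbTE bNS).
Qed.

Hypothesis tree : is_tree tend.

Lemma tree_cut_covers X S e a1 a2 :
  edge_leaves e a1 a2 -> separates S a1 a2 -> conn tend X a1 a2 ->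
  exists2 f, f \in cut tend X S & e \in cut ends [set: E] (leaf_image (tree_side tend f)).
Proof.
move=> lv sep conn12; have [f fX sep_f] := tree_cut_separates tree sep conn12.
by exists f; rewrite // (mem_cut_leaf_image _ _ lv) in_setT.
Qed.

Variables (R : numDomainType) (xt : E -> R).
Hypothesis xt_ge0 : forall e, 0 <= xt e.

Definition tree_load (f : TE) : R :=
  \sum_(e in cut ends [set: E] (leaf_image (tree_side tend f))) xt e.

Lemma tree_load_ge0 f : 0 <= tree_load f.
Proof. exact: sumr_ge0. Qed.

Lemma le_tree_cut_load X S e a1 a2 :
  edge_leaves e a1 a2 -> separates S a1 a2 -> conn tend X a1 a2 ->
  xt e <= \sum_(f in cut tend X S) tree_load f.
Proof.
move=> lv sep conn12; have [f fX e_f] := tree_cut_covers lv sep conn12.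
by apply: le_trans (ler_sum_mem tree_load_ge0 fX); apply: ler_sum_mem.
Qed.

Lemma cut_sum_le_tree_cut_load Z S (M : {set TE}) :
  \sum_(e in cut ends Z (leaf_image S)) xt e <=
  \sum_(f in cut tend (~: M) S) tree_load f + \sum_(f in M) tree_load f.
Proof.
have sub : cut tend [set: TE] S \subset cut tend (~: M) S :|: M.
  by apply/subsetP => f; rewrite !inE /= => ->; rewrite andbT orNb.
apply: le_trans (ler_sum_subsetU tree_load_ge0 sub).
apply: ler_sum_cover => // e; have [a1 [a2 lv]] := edge_leaves_exist e.
rewrite (mem_cut_leaf_image _ _ lv) => /andP[_ sep].
exact: tree_cut_covers lv sep (tree.1 a1 a2).
Qed.

Lemma uncut_edge_le_tree_cut_load (M2 : TE -> seq E) (H F : {set E}) (A B : {set V})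
    (S : {set N}) e :
  partitions_shattered ends H F tend M1 M2 A B ->
  (forall a, is_leaf tend a -> M1 a \in A -> a \in S) ->
  (forall a, is_leaf tend a -> M1 a \in B -> a \notin S) ->
  e \in H :\: F -> e \in cut ends H (leaf_image S) ->
  xt e <= \sum_(f in cut tend (~: Minv M2 F) S) tree_load f.
Proof.
move=> part AS BS eHF; have [a1 [a2 lv]] := edge_leaves_exist e.
rewrite (mem_cut_leaf_image _ _ lv) => /andP[_ sep].
exact: le_tree_cut_load lv sep (edge_leaves_conn_compl_Minv part AS BS eHF lv sep).
Qed.

End LeafImages.

Lemma mem_compF_self (V E : finType) (ends : E -> V * V) (H F : {set E}) v :
  v \in compF ends H F v.
Proof. by rewrite inE; apply: connect0. Qed.

Lemma violated_of_cut_subset (V E : finType) (ends : E -> V * V) (safe : {set E})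
    (p q k : nat) (s t : 'I_k -> V) (H : {set E}) (S0 U : {set V}) (i : 'I_k) :
  flex_connected ends safe p q s t H -> violated ends safe p q s t H S0 ->
  cut ends H U \subset cut ends H S0 -> separates U (s i) (t i) ->
  violated ends safe p q s t H U.
Proof.
move=> flex /and3P[_ /eqP card_S0 safe_S0] sub sepU.
have le_card := subset_leq_card sub.
have le_safe := subset_leq_card (setSI safe sub).
apply/and3P; split; first by apply/existsP; exists i.
  by apply/eqP; case/orP: (flex i U sepU); lia.
exact: leq_ltn_trans le_safe safe_S0.
Qed.

Lemma tree_capE (R : numFieldType) (V E N TE : finType) (ends : E -> V * V)
    (p q : nat) (beta : R) (H : {set E}) (x : E -> R) (tend : TE -> N * N)
    (M1 : N -> V) (f : TE) :
  tree_cap ends p q beta H x tend M1 f = tree_load ends tend M1 (xtilde p q beta H x) f.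
Proof.
rewrite /tree_cap /tree_load; apply: eq_bigl => e; congr (e \in cut _ _ _).
by apply/setP => v; rewrite !inE; apply: eq_existsb => a; rewrite inE.
Qed.

Theorem lemma4p4 (R : realFieldType) (V E : finType) (ends : E -> V * V)
  (safe : {set E}) (p q k : nat) (s t : 'I_k -> V) (H : {set E})
  (beta : R) (x : E -> R)
  (N TE : finType) (tend : TE -> N * N) (M1 : N -> V) (M2 : TE -> seq E)
  (F : {set E}) (X Y : {set V}) (S : {set N}) :
  (1 <= p + q)%N ->
  flex_connected ends safe p q s t H ->
  1 <= beta ->
  (forall S0 : {set V}, violated ends safe p q s t H S0 ->
     1 <= \sum_(e in cut ends (~: H) S0) x e) ->
  (forall e, e \notin H -> 0 < x e /\ x e < (4 * (p + q)%:R * beta)^-1) ->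
  violating ends safe p q s t H F ->
  tree_embedding ends tend M1 M2 ->
  \sum_(f in Minv M2 F) tree_cap ends p q beta H x tend M1 f <= 2^-1 ->
  in_ZF ends s t H F tend M1 M2 X Y ->
  (forall a, is_leaf tend a -> M1 a \in X -> a \in S) ->
  (forall a, is_leaf tend a -> M1 a \in Y -> a \notin S) ->
  (4 * (p + q)%:R * beta)^-1
    <= \sum_(f in cut tend (~: Minv M2 F) S) tree_cap ends p q beta H x tend M1 f.
Proof.
move=> pq_gt0 flex beta_ge1 x_viol x_bounds [S0 [viol_S0 ->]] [tree leaf_inj leaf_surj _]
  good [A [B [i [part -> ->]]]] XS YS.
set kappa := (4 * (p + q)%:R * beta)^-1.
have pq_ge1 : 1 <= (p + q)%:R :> R by rewrite ler1n.
have denom_ge2 : 2 <= 4 * (p + q)%:R * beta by nra.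
have kappa_gt0 : 0 < kappa by rewrite invr_gt0; lra.
have kappa_half : kappa <= 2^-1 by rewrite /kappa lef_pV2 ?posrE //; lra.
set xt := xtilde p q beta H x.
have xt_ge0 e : 0 <= xt e.
  by rewrite /xt /xtilde; case: ifPn => [_ | /x_bounds[x_gt0 _]]; apply: ltW.
rewrite !(eq_bigr _ (fun f _ => tree_capE ends p q beta H x tend M1 f)) in good *.
have AS a : is_leaf tend a -> M1 a \in A -> a \in S by move=> la aA; rewrite XS // inE aA.
have BS a : is_leaf tend a -> M1 a \in B -> a \notin S by move=> la aB; rewrite YS // inE aB.
set U := leaf_image tend M1 S.
have [cutU_sub | /subsetPn[e eU eNF]] := boolP (cut ends H U \subset cut ends H S0); last first.
  have eH : e \in H by move: eU; rewrite inE => /andP[].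
  have := uncut_edge_le_tree_cut_load leaf_inj leaf_surj tree xt_ge0 part AS BS _ eU.
  by rewrite /xt /xtilde eH; apply; rewrite inE eNF eH.
have sepU : separates U (s i) (t i).
  by apply: (leaf_image_separates leaf_inj leaf_surj XS YS);
    rewrite in_setU mem_compF_self orbT.
have violU := violated_of_cut_subset flex viol_S0 cutU_sub sepU.
have x_xt : \sum_(e in cut ends (~: H) U) x e = \sum_(e in cut ends (~: H) U) xt e.
  by apply: eq_bigr => e; rewrite !inE => /andP[eNH _]; rewrite /xt /xtilde (negbTE eNH).
have := cut_sum_le_tree_cut_load ends leaf_inj leaf_surj tree xt_ge0 (~: H) S
  (Minv M2 (cut ends H S0)).
have := x_viol U violU; rewrite x_xt; lra.
Qed.
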